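(* For every $k\ge 1$, letting $n=t_k=\frac{k(k+1)}{2}$ and $K_n$ the complete graph of order $n$, we have ${\rm I}_e(K_n)=|E(K_n)|-\frac{k(k+1)(k-1)(3k+2)}{24}$.
   Context: All graphs are finite and simple. A graph is locally irregular if no two adjacent vertices have the same degree. An edge-irregulator of a graph $G$ is a set $S\subseteq E(G)$ such that $G-S$ is locally irregular; ${\rm I}_e(G)$ is the minimum cardinality of an edge-irregulator of $G$. $t_k$ denotes the $k$-th triangular number $1+2+\dots+k$. *)

From mathcomp Require Import all_boot.
Set Implicit Arguments. Unset Strict Implicit. Unset Printing Implicit Defensive.

(* A finite simple graph on vertex type T is given by its edge set,
   a set of 2-element subsets of T. *)
Definition deg (T : finType) (E : {set {set T}}) (v : T) : nat :=
  #|[set e in E | v \in e]|.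

Definition locally_irregular (T : finType) (E : {set {set T}}) : Prop :=
  forall u v : T, u != v -> [set u; v] \in E -> deg E u != deg E v.

Definition edge_irregulator (T : finType) (E S : {set {set T}}) : Prop :=
  S \subset E /\ locally_irregular (E :\: S).

Definition is_Ie (T : finType) (E : {set {set T}}) (m : nat) : Prop :=
  (exists S, edge_irregulator E S /\ #|S| = m) /\
  (forall S, edge_irregulator E S -> m <= #|S|).

Definition complete_edges (n : nat) : {set {set 'I_n}} :=
  [set e : {set 'I_n} | #|e| == 2].

Definition tri (k : nat) : nat := (k * k.+1) %/ 2.

From mathcomp Require Import all_boot zify.
Set Implicit Arguments. Unset Strict Implicit. Unset Printing Implicit Defensive.

(* A vertex of degree d in a locally irregular graph on n vertices is adjacent to
   no vertex of its own degree, so at most n - d vertices have degree d: at most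
   j vertices have co-degree j.  With n = t_k the co-degrees therefore sum to at
   least 1*1 + 2*2 + ... + k*k, i.e. 2|E| <= n^2 - (1^2 + ... + k^2).  The complete
   multipartite graph with parts of sizes 1, 2, ..., k attains this bound, since a
   vertex in the part of size i has degree n - i; deleting all other edges of K_n
   is thus an optimal edge-irregulator. *)

Lemma triS k : tri k.+1 = tri k + k.+1.
Proof. rewrite /tri; nia. Qed.

Lemma tri2 k : 2 * tri k = k * k.+1.
Proof. elim: k => [//|k IH]; rewrite triS; nia. Qed.

Lemma leq_tri : {homo tri : i j / i <= j}.
Proof. by move=> i j le_ij; apply/leq_div2r/leq_mul. Qed.

Lemma leq_self_tri k : k <= tri k.
Proof. have := tri2 k; nia. Qed.

Lemma sum_tri_diff k : \sum_(j < k) (tri k - tri j) = \sum_(i < k) i.+1 ^ 2.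
Proof.
elim: k => [|k IH]; first by rewrite !big_ord0.
rewrite !big_ord_recr /= triS addKn -IH.
rewrite (eq_bigr (fun j : 'I_k => tri k - tri j + k.+1)) => [|j _]; last first.
  by rewrite addnBAC // leq_tri // ltnW.
by rewrite big_split /= sum_nat_const card_ord; lia.
Qed.

Lemma sum_sq k : 6 * \sum_(i < k) i.+1 ^ 2 = k * k.+1 * (2 * k + 1).
Proof. by elim: k => [|k IH]; rewrite ?big_ord0 // big_ord_recr /= mulnDr IH; lia. Qed.

Lemma card_set_sum (T : finType) (P : pred T) : #|[set v | P v]| = \sum_v P v.
Proof. by rewrite -sum1dep_card big_mkcond; apply: eq_bigr => v _; case: (P v). Qed.

Lemma set2_inj (T : finType) (v : T) : injective (fun u => [set v; u]).
Proof.
move=> x y exy; have /set2P[xv|//] : x \in [set v; y] by rewrite -exy set22.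
by have /set2P[->|->] : y \in [set v; x] by rewrite exy set22.
Qed.

Lemma sum_ltn_ord k x : \sum_(j < k) (j < x) = minn x k.
Proof.
elim: k => [|k IH]; first by rewrite big_ord0 minn0.
by rewrite big_ord_recr /= IH; case: (ltnP k x) => le_kx /=; lia.
Qed.

Lemma sum_card_gt (T : finType) (f : T -> nat) k :
  \sum_(j < k) #|[set v | j < f v]| = \sum_v minn (f v) k.
Proof.
rewrite (eq_bigr (fun j : 'I_k => \sum_v (j < f v))) => [|j _]; last first.
  by rewrite card_set_sum.
by rewrite exchange_big; apply: eq_bigr => v _; rewrite sum_ltn_ord.
Qed.

Section FiberBound.

Variables (T : finType) (f : T -> nat).
Hypothesis card_fiber : forall j, #|[set v | f v == j]| <= j.

Lemma card_le_tri j : #|[set v | f v <= j]| <= tri j.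
Proof.
elim: j => [|j IH].
  have -> : [set v | f v <= 0] = [set v | f v == 0].
    by apply/setP => v; rewrite !inE leqn0.
  exact: card_fiber.
have -> : [set v | f v <= j.+1] = [set v | f v <= j] :|: [set v | f v == j.+1].
  by apply/setP => v; rewrite !inE leq_eqVlt ltnS orbC.
by rewrite cardsU triS; have := card_fiber j.+1; lia.
Qed.

Lemma sum_tri_le k : \sum_(j < k) (#|T| - tri j) <= \sum_v f v.
Proof.
(* At least #|T| - tri j points have a value above j, and counting these for
   every j < k counts each v at most f v times. *)
apply: (@leq_trans (\sum_(j < k) #|[set v | j < f v]|)).
  apply: leq_sum => j _; rewrite -(cardsC [set v | f v <= j]).
  have -> : ~: [set v | f v <= j] = [set v | j < f v].
    by apply/setP => v; rewrite !inE ltnNge.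
  by have := card_le_tri j; lia.
by rewrite sum_card_gt; apply: leq_sum => v _; apply: geq_minl.
Qed.

End FiberBound.

Section EdgeSets.

Variables (T : finType) (G : {set {set T}}).
Hypothesis G2 : forall e, e \in G -> #|e| == 2.

Lemma handshake : \sum_v deg G v = 2 * #|G|.
Proof.
under eq_bigr do rewrite /deg card_set_sum.
rewrite exchange_big [RHS]mulnC -sum_nat_const [RHS]big_mkcond.
apply: eq_bigr => e _; case: ifP => [eG|_]; last by rewrite big1.
rewrite -(eqP (G2 eG)) -sum1_card [RHS]big_mkcond.
by apply: eq_bigr => v _; case: (v \in e).
Qed.

Hypothesis G_irr : locally_irregular G.

Lemma deg_add_card_same_deg v : deg G v + #|[set u | deg G u == deg G v]| <= #|T|.
Proof.
have edges_at_v : [set e in G | v \in e] \subset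
    [set [set v; u] | u in ~: [set u | deg G u == deg G v]].
  apply/subsetP => e; rewrite inE => /andP[eG ve].
  have /cards2P[x [y [xy exy]]] := G2 eG; subst e.
  case/set2P: ve => ->; first by apply: imset_f; rewrite !inE eq_sym; apply: G_irr.
  by rewrite setUC; apply: imset_f; rewrite !inE; apply: G_irr; rewrite // eq_sym.
rewrite -(cardsC [set u | deg G u == deg G v]) addnC leq_add2l.
exact: leq_trans (subset_leq_card edges_at_v) (leq_imset_card _ _).
Qed.

Lemma card_codeg_eq j : #|[set v | #|T| - deg G v == j]| <= j.
Proof.
have [->|[v]] := set_0Vmem [set v | #|T| - deg G v == j]; first by rewrite cards0.
rewrite inE => /eqP codeg_v.
have same_class : [set u | #|T| - deg G u == j] = [set u | deg G u == deg G v].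
  apply/setP => u; rewrite !inE -codeg_v.
  have := deg_add_card_same_deg u; have := deg_add_card_same_deg v.
  by move=> ? ?; apply/eqP/eqP; lia.
have := deg_add_card_same_deg v; rewrite -same_class; lia.
Qed.

Lemma irregular_card_bound k : 2 * #|G| + \sum_(j < k) (#|T| - tri j) <= #|T| ^ 2.
Proof.
have codeg_sum := sum_tri_le card_codeg_eq k.
rewrite -handshake; apply: leq_trans (leq_add (leqnn _) codeg_sum) _.
rewrite -big_split -mulnn -sum_nat_const; apply: leq_sum => v _ /=.
by rewrite subnKC //; apply: leq_trans (leq_addr _ _) (deg_add_card_same_deg v).
Qed.

End EdgeSets.

Section Multipartite.

Variables (T : finType) (I : eqType) (p : T -> I).

Definition multipartite : {set {set T}} :=
  [set [set u; w] | u in T, w in T & p u != p w].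

Definition block (v : T) : {set T} := [set u | p u == p v].

Lemma in_block u v : (u \in block v) = (p u == p v).
Proof. by rewrite inE. Qed.

Lemma multipartite_edges_at v :
  [set e in multipartite | v \in e] = [set [set v; u] | u in ~: block v].
Proof.
apply/setP => e; rewrite inE; apply/andP/imsetP.
  case=> /imset2P[x y _]; rewrite !(inE, in_block) /= => pxy -> /set2P[]->.
    by exists y; rewrite // !(inE, in_block) eq_sym.
  by exists x; rewrite 1?setUC // !(inE, in_block).
case=> u; rewrite !(inE, in_block) => puv ->; split; last exact: set21.
by apply/imset2P; exists v u; rewrite // inE eq_sym.
Qed.

Lemma deg_multipartite v : deg multipartite v = #|~: block v|.
Proof. by rewrite /deg multipartite_edges_at card_imset //; apply: set2_inj. Qed.

Lemma multipartite_card2 e : e \in multipartite -> #|e| == 2.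
Proof.
case/imset2P => u w _; rewrite inE => puw ->.
have uw : u != w by apply: contraNneq puw => ->.
by rewrite cards2 uw.
Qed.

Lemma multipartite_irregular :
  (forall u v, p u != p v -> #|block u| != #|block v|) -> locally_irregular multipartite.
Proof.
move=> block_inj u v _ uv_edge.
have : [set u; v] \in [set e in multipartite | u \in e] by rewrite inE uv_edge set21.
rewrite multipartite_edges_at => /imsetP[w].
rewrite !(inE, in_block) => puw /(set2_inj (v := u)) vw.
rewrite !deg_multipartite -vw in puw *.
have := block_inj _ _ puw; have := cardsC (block u); have := cardsC (block v).
lia.
Qed.

Lemma multipartite_card : 2 * #|multipartite| + \sum_v #|block v| = #|T| ^ 2.
Proof.
rewrite -handshake; last exact: multipartite_card2.
rewrite -big_split -mulnn -sum_nat_const; apply: eq_bigr => v _ /=.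
by rewrite deg_multipartite addnC cardsC.
Qed.

End Multipartite.

Definition trunc_tri (v : nat) : nat := \sum_(j < v) (tri j.+1 <= v).

Lemma trunc_tri_eq i v : tri i <= v < tri i.+1 -> trunc_tri v = i.
Proof.
case/andP => le_iv lt_vi; rewrite /trunc_tri.
rewrite (eq_bigr (fun j : 'I_v => nat_of_bool (j < i))) ?sum_ltn_ord.
  by apply/minn_idPl; apply: leq_trans (leq_self_tri i) le_iv.
move=> j _; congr nat_of_bool; case: (ltnP j i) => [lt_ji|le_ij].
  exact: leq_trans (leq_tri lt_ji) le_iv.
by apply/negbTE; rewrite -ltnNge; apply: leq_trans lt_vi (leq_tri _).
Qed.

Lemma trunc_triP v : tri (trunc_tri v) <= v < tri (trunc_tri v).+1.
Proof.
suff /(_ v.+1 (leq_self_tri _))[i win_i] :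
    forall m, v < tri m -> exists i, tri i <= v < tri i.+1.
  by rewrite (trunc_tri_eq win_i).
elim=> [//|m IH] lt_vm; have [/IH //|le_mv] := ltnP v (tri m).
by exists m; rewrite le_mv.
Qed.

Lemma eq_trunc_tri v i : (trunc_tri v == i) = (tri i <= v < tri i.+1).
Proof.
by apply/eqP/idP => [<-|/trunc_tri_eq //]; apply: trunc_triP.
Qed.

Lemma trunc_tri_lt k v : v < tri k -> trunc_tri v < k.
Proof.
move=> lt_vk; rewrite ltnNge; apply/negP => /leq_tri le_kt.
by have /andP[+ _] := trunc_triP v; rewrite leqNgt (leq_trans lt_vk le_kt).
Qed.

Lemma sum_ord_interval n a b : \sum_(u < n) (a <= u < b) = minn n b - minn n a.
Proof.
elim: n => [|n IH]; first by rewrite big_ord0 !min0n.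
by rewrite big_ord_recr /= IH; case: (leqP a n) => ?; case: (ltnP n b) => ? /=; lia.
Qed.

Section Staircase.

Variable k : nat.

Definition staircase_part (v : 'I_(tri k)) : 'I_k := Ordinal (trunc_tri_lt (ltn_ord v)).

Definition staircase : {set {set 'I_(tri k)}} := multipartite staircase_part.

Lemma card_staircase_class (i : 'I_k) : #|[set v | staircase_part v == i]| = i.+1.
Proof.
have -> : [set v | staircase_part v == i] = [set v : 'I_(tri k) | tri i <= v < tri i.+1].
  by apply/setP => v; rewrite !inE -val_eqE /= eq_trunc_tri.
rewrite card_set_sum sum_ord_interval.
have := leq_tri (ltn_ord i); rewrite triS; lia.
Qed.

Lemma card_staircase_block v : #|block staircase_part v| = (staircase_part v).+1.
Proof. exact: card_staircase_class. Qed.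

Lemma staircase_irregular : locally_irregular staircase.
Proof.
apply: multipartite_irregular => u v; rewrite !card_staircase_block eqSS.
by apply: contra => /eqP/val_inj ->.
Qed.

Lemma staircase_card : 2 * #|staircase| + \sum_(i < k) i.+1 ^ 2 = tri k ^ 2.
Proof.
rewrite -[X in _ = X ^ 2](card_ord (tri k)) -(multipartite_card staircase_part).
congr (_ + _).
rewrite (partition_big staircase_part predT) //=; apply: eq_bigr => i _.
rewrite (eq_bigr (fun=> i.+1 * 1)) => [|v /eqP <-]; last first.
  by rewrite muln1 card_staircase_block.
by rewrite -big_distrr /= sum1dep_card card_staircase_class mulnn.
Qed.

End Staircase.

Lemma card_staircase k : 24 * #|staircase k| = k * k.+1 * k.-1 * (3 * k + 2).
Proof.
have := staircase_card k; have := sum_sq k; have := tri2 k.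
by case: k => [|k] /=; nia.
Qed.

Theorem theorem10 (k : nat) : 1 <= k ->
  is_Ie (complete_edges (tri k))
    (#|complete_edges (tri k)| - (k * k.+1 * k.-1 * (3 * k + 2)) %/ 24).
Proof.
move=> _; set E := complete_edges (tri k).
have E2 e : (e \in E) = (#|e| == 2) by rewrite inE.
have card_staircaseE : #|staircase k| = (k * k.+1 * k.-1 * (3 * k + 2)) %/ 24.
  by rewrite -card_staircase mulKn.
have sub_stair : staircase k \subset E.
  by apply/subsetP => e /multipartite_card2; rewrite E2.
rewrite -card_staircaseE; split.
  exists (E :\: staircase k); split; last by rewrite cardsD (setIidPr sub_stair).
  split; first exact: subsetDl.
  by rewrite setDDr setDv set0U (setIidPr sub_stair); apply: staircase_irregular.
move=> S [sub_S irr_S].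
have edges2 e : e \in E :\: S -> #|e| == 2 by rewrite inE E2 => /andP[_].
have := irregular_card_bound edges2 irr_S k.
rewrite card_ord sum_tri_diff -staircase_card cardsD (setIidPr sub_S).
lia.
Qed.
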